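(* Let $Q$ be a good quantifier of type $\langle k\rangle$ on $\mathbb{N}$. Then for every $n$ and every $a\in\mathbb{N}^n$, the orbit $\{g(a):g\in\mathrm{Aut}(Q)\}$ is definable in $\mathscr{L}_{\omega\omega}(Q)$.
   Context: A quantifier of type $\langle k\rangle$ on $\mathbb{N}$ is a set $Q\subseteq 2^{\mathbb{N}^k}$ (a family of subsets of $\mathbb{N}^k$; $2^{\mathbb{N}^k}$ carries the product topology). $Q$ is downwards closed if it is closed under subsets. For a map $p$ and $A\subseteq\mathbb{N}^k$, $p(A)=\{(p(a_1),\dots,p(a_k)):(a_1,\dots,a_k)\in A\}$. For $Q$ closed and downwards closed, a function $p:n\to\mathbb{N}$ (where $n=\{0,\dots,n-1\}$) is compatible with $Q$ if for every $A\subseteq n^k$, $A\in Q\iff p(A)\in Q$. A permutation $f$ of $\mathbb{N}$ fixes (leaves invariant) $Q$ if $A\in Q\iff f(A)\in Q$ for all $A\subseteq\mathbb{N}^k$; $\mathrm{Aut}(Q)$ is the group of such permutations, acting on tuples coordinatewise. $Q$ is good if it is closed, downwards closed, and every finite injection $p:n\to\mathbb{N}$ compatible with $Q$ extends to a permutation of $\mathbb{N}$ fixing $Q$. $\mathscr{L}_{\omega\omega}(Q)$ is first-order logic extended by formulas $Qx\,\varphi(x,y)$ ($x$ a $k$-tuple of variables) with $\mathbb{N}\models Qx\,\varphi(x,b)$ iff $\{a\in\mathbb{N}^k:\mathbb{N}\models\varphi(a,b)\}\in Q$. A set $B\subseteq\mathbb{N}^n$ is definable in $\mathscr{L}_{\omega\omega}(Q)$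 if there is a formula $\varphi(x_1,\dots,x_n)$ whose only non-logical symbol is $Q$ such that $b\in B\iff\mathbb{N}\models\varphi(b)$. *)

From mathcomp Require Import all_boot.
Set Implicit Arguments. Unset Strict Implicit. Unset Printing Implicit Defensive.

Definition quant (k : nat) := (k.-tuple nat -> Prop) -> Prop.

Definition img (k : nat) (p : nat -> nat) (A : k.-tuple nat -> Prop)
  : k.-tuple nat -> Prop :=
  fun x => exists t, A t /\ x = map_tuple p t.

Definition down_closed (k : nat) (Q : quant k) : Prop :=
  forall A B : k.-tuple nat -> Prop, Q A -> (forall x, B x -> A x) -> Q B.

(* closed in the product topology on 2^(N^k): A is in Q whenever every basic
   neighbourhood of A (determined by a finite set F of points) meets Q. *)
Definition closed_q (k : nat) (Q : quant k) : Prop :=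
  forall A : k.-tuple nat -> Prop,
    (forall F : seq (k.-tuple nat),
        exists B, Q B /\ forall x, x \in F -> (A x <-> B x)) ->
    Q A.

Definition sub_nk (k n : nat) (A : k.-tuple nat -> Prop) : Prop :=
  forall t, A t -> all (fun i => i < n) t.

(* p : n -> N compatible with Q (only the values of p on {0..n-1} matter) *)
Definition compatible (k : nat) (Q : quant k) (n : nat) (p : nat -> nat) : Prop :=
  forall A, sub_nk n A -> (Q A <-> Q (img p A)).

Definition fixes (k : nat) (Q : quant k) (f : nat -> nat) : Prop :=
  forall A, Q A <-> Q (img f A).

Definition aut (k : nat) (Q : quant k) (f : nat -> nat) : Prop :=
  bijective f /\ fixes Q f.

Definition good (k : nat) (Q : quant k) : Prop :=
  closed_q Q /\ down_closed Q /\
  forall (n : nat) (p : nat -> nat),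
    (forall i j, i < n -> j < n -> p i = p j -> i = j) ->
    compatible Q n p ->
    exists f, aut Q f /\ forall i, i < n -> f i = p i.

Inductive form (k : nat) : Type :=
| FEq  : nat -> nat -> form k
| FNot : form k -> form k
| FAnd : form k -> form k -> form k
| FEx  : nat -> form k -> form k
| FQ   : k.-tuple nat -> form k -> form k.

Definition upd1 (e : nat -> nat) (v a : nat) : nat -> nat :=
  fun i => if i == v then a else e i.

Fixpoint upd (e : nat -> nat) (vs xs : seq nat) : nat -> nat :=
  match vs, xs with
  | v :: vs', x :: xs' => upd (upd1 e v x) vs' xs'
  | _, _ => e
  end.

Fixpoint sat (k : nat) (Q : quant k) (e : nat -> nat) (phi : form k) : Prop :=
  match phi with
  | FEq i j => e i = e j
  | FNot psi => ~ sat Q e psi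
  | FAnd psi chi => sat Q e psi /\ sat Q e chi
  | FEx v psi => exists a, sat Q (upd1 e v a) psi
  | FQ vs psi => Q (fun a : k.-tuple nat => sat Q (upd e vs a) psi)
  end.

(* B subset of N^n is definable (without parameters) in L_{omega omega}(Q):
   some formula phi(x_0,...,x_{n-1}) with free variables among 0..n-1
   (its truth value does not depend on the other variables). *)
Definition definable (k : nat) (Q : quant k) (n : nat)
  (B : n.-tuple nat -> Prop) : Prop :=
  exists phi : form k, forall (b : n.-tuple nat) (e : nat -> nat),
    (forall i, i < n -> e i = nth 0 b i) -> (B b <-> sat Q e phi).

Definition aut_orbit (k : nat) (Q : quant k) (n : nat) (a : n.-tuple nat)
  : n.-tuple nat -> Prop :=
  fun b => exists g, aut Q g /\ b = map_tuple g a.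

From mathcomp Require Import all_boot.
From mathcomp Require Import boolp.
Set Implicit Arguments. Unset Strict Implicit. Unset Printing Implicit Defensive.

(* Choose M larger than every entry of a.  A tuple b lies in the orbit of a
   iff b = p(a) for some injection p : M -> N compatible with Q: an
   automorphism restricts to such a p, and goodness extends such a p back to
   an automorphism.  Compatibility only quantifies over the finitely many
   subsets A of M^k, so for the values y_j = p(j) it is the finite conjunction
   "Q x (x in p(A)) holds iff Q(A) does", each x in p(A) being a finite
   disjunction of equations between the x_i and the y_j.  Quantifying the y_j
   existentially yields the defining formula. *)

Section Connectives.
Variables (k : nat) (Q : quant k).

Definition FTrue : form k := FEq k 0 0.

Definition bigAnd (T : Type) (f : T -> form k) (s : seq T) : form k :=
  foldr (fun x phi => FAnd (f x) phi) FTrue s.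

Definition bigOr (T : Type) (f : T -> form k) (s : seq T) : form k :=
  FNot (bigAnd (fun x => FNot (f x)) s).

Definition FExs (vs : seq nat) (phi : form k) : form k := foldr (@FEx k) phi vs.

Definition Fmatch (P : Prop) (phi : form k) : form k :=
  if `[< P >] then phi else FNot phi.

Lemma sat_bigAnd (T : eqType) (f : T -> form k) s e :
  sat Q e (bigAnd f s) <-> forall x, x \in s -> sat Q e (f x).
Proof.
elim: s => [|y s IH] /=; first by split.
rewrite IH; split => [[fy fs] x | fs].
  by rewrite in_cons => /predU1P[->|]; [exact: fy | exact: fs].
by split=> [|x xs]; apply: fs; rewrite in_cons ?eqxx ?xs ?orbT.
Qed.

Lemma sat_bigOr (T : eqType) (f : T -> form k) s e :
  sat Q e (bigOr f s) <-> exists2 x, x \in s & sat Q e (f x).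
Proof.
rewrite /bigOr /= sat_bigAnd.
split=> [nall | [x xs fx] nall]; last exact: nall x xs fx.
by apply: contrapT => nex; apply: nall => x xs fx; apply: nex; exists x.
Qed.

Lemma sat_FExs vs phi e :
  sat Q e (FExs vs phi) <-> exists2 ys, size ys = size vs & sat Q (upd e vs ys) phi.
Proof.
elim: vs e => [|v vs IH] e /=.
  by split=> [phi_e | [[|//] _ //]]; exists [::].
split=> [[y /IH[ys ys_size phi_e]] | [[|y ys] //= [ys_size] phi_e]].
  by exists (y :: ys); rewrite /= ?ys_size.
by exists y; apply/IH; exists ys.
Qed.

Lemma sat_FExs_mkseq vs phi e :
  sat Q e (FExs vs phi) <-> exists p, sat Q (upd e vs (mkseq p (size vs))) phi.
Proof.
rewrite sat_FExs; split=> [[ys <- phi_e] | [p phi_e]].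
  by exists (nth 0 ys); rewrite mkseq_nth.
by exists (mkseq p (size vs)); rewrite ?size_mkseq.
Qed.

Lemma sat_Fmatch P phi e : sat Q e (Fmatch P phi) <-> (P <-> sat Q e phi).
Proof. by rewrite /Fmatch; case: asboolP => /= HP; split; tauto. Qed.

End Connectives.

Lemma upd_iota_below e v m ys i : i < v -> upd e (iota v m) ys i = e i.
Proof.
elim: m v e ys => [|m IH] v e [|y ys] //= lt_iv.
by rewrite IH ?(ltn_trans lt_iv) // /upd1 ltn_eqF.
Qed.

Lemma upd_iota_nth e v m ys i : size ys = m -> i < m ->
  upd e (iota v m) ys (v + i) = nth 0 ys i.
Proof.
elim: m v e ys i => [|m IH] v e [|y ys] i //= [ys_size].
case: i => [_ | i lt_im].
  by rewrite addn0 upd_iota_below // /upd1 eqxx.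
by rewrite addnS -addSn IH.
Qed.

Lemma upd_iota_mkseq e v m p i : i < m -> upd e (iota v m) (mkseq p m) (v + i) = p i.
Proof. by move=> lt_im; rewrite upd_iota_nth ?size_mkseq ?nth_mkseq. Qed.

Lemma eq_map_tuple_iff (T U : Type) n (f : T -> U) (t : n.-tuple T) (u : n.-tuple U) :
  u = map_tuple f t <-> forall i, tnth u i = f (tnth t i).
Proof.
split=> [-> i | eq_ut]; first exact: tnth_map.
by apply: eq_from_tnth => i; rewrite tnth_map.
Qed.

Lemma down_closed_ext k (Q : quant k) : down_closed Q ->
  forall A B, (forall x, A x <-> B x) -> (Q A <-> Q B).
Proof. by move=> Qdown A B AB; split=> QA; apply: Qdown QA _ => x /AB. Qed.

Lemma img_ext k (p : nat -> nat) (A B : k.-tuple nat -> Prop) :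
  (forall u, A u <-> B u) -> forall x, img p A x <-> img p B x.
Proof. by move=> AB x; split=> -[t [/AB At ->]]; exists t. Qed.

Section Diagram.
Variables (k : nat) (Q : quant k).
Hypothesis Qdown : down_closed Q.
Variables (m v : nat).
Local Notation M := m.+1.

(* The variables v + j, j < M, stand for the points p j; Q_image_form binds
   the k variables v + M + i, all larger. *)

Definition nat_tuples (S : {set k.-tuple 'I_M}) : k.-tuple nat -> Prop :=
  fun u => exists2 t, t \in S & u = map_tuple val t.

Lemma sub_nk_nat_tuples S : sub_nk M (nat_tuples S).
Proof. by move=> _ [t _ ->]; apply/allP => /= _ /mapP[i _ ->]. Qed.

Lemma sub_nk_eq_nat_tuples A : sub_nk M A -> exists S, forall u, A u <-> nat_tuples S u.
Proof.
move=> A_small; exists [set t | `[< A (map_tuple val t) >]] => u.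
split=> [Au | [t + ->]]; last by rewrite inE => /asboolP.
have u_small := allP (A_small u Au).
have val_inord : u = map_tuple val (map_tuple inord u : k.-tuple 'I_M).
  by apply/eq_map_tuple_iff => i; rewrite tnth_map /= inordK ?u_small ?mem_tnth.
by exists (map_tuple inord u); rewrite // inE -val_inord; apply/asboolP.
Qed.

Lemma compatible_nat_tuples p :
  compatible Q M p <-> forall S, Q (nat_tuples S) <-> Q (img p (nat_tuples S)).
Proof.
split=> [p_comp S | p_comp A /sub_nk_eq_nat_tuples[S AS]].
  exact/p_comp/sub_nk_nat_tuples.
by rewrite (down_closed_ext Qdown AS) (down_closed_ext Qdown (img_ext p AS)).
Qed.

Definition in_image_form (S : {set k.-tuple 'I_M}) : form k :=
  bigOr (fun t : k.-tuple 'I_M =>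
           bigAnd (fun i : 'I_k => FEq k (v + M + i) (v + tnth t i)) (enum 'I_k))
        (enum S).

Definition Q_image_form S : form k := FQ [tuple of iota (v + M) k] (in_image_form S).

Lemma sat_Q_image_form e p S : (forall j, j < M -> e (v + j) = p j) ->
  sat Q e (Q_image_form S) <-> Q (img p (nat_tuples S)).
Proof.
move=> e_p.
suff sat_x (x : k.-tuple nat) :
    sat Q (upd e (iota (v + M) k) x) (in_image_form S) <-> img p (nat_tuples S) x.
  exact: down_closed_ext.
set E := upd e (iota (v + M) k) x.
have E_x (i : 'I_k) : E (v + M + i) = tnth x i.
  by rewrite /E upd_iota_nth ?size_tuple // (tnth_nth 0).
have E_p (t : k.-tuple 'I_M) i : E (v + tnth t i) = p (tnth t i).
  by rewrite /E upd_iota_below ?e_p ?ltn_add2l.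
rewrite sat_bigOr; split=> [[t] | [_ [[t tS ->] x_pt]]].
  rewrite mem_enum => tS /sat_bigAnd /= x_pt.
  exists (map_tuple val t); split; first by exists t.
  apply/eq_map_tuple_iff => i; rewrite tnth_map -E_x -E_p.
  by apply: x_pt; rewrite mem_enum.
exists t; rewrite ?mem_enum //; apply/sat_bigAnd => i _ /=.
by rewrite E_x E_p x_pt !tnth_map.
Qed.

Definition diagram_form : form k :=
  FAnd (bigAnd (fun ij : 'I_M * 'I_M =>
                 Fmatch (ij.1 = ij.2 :> nat) (FEq k (v + ij.1) (v + ij.2)))
          (enum {: 'I_M * 'I_M}))
       (bigAnd (fun S => Fmatch (Q (nat_tuples S)) (Q_image_form S))
          (enum {: {set k.-tuple 'I_M}})).

Lemma sat_diagram_form e p : (forall j, j < M -> e (v + j) = p j) ->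
  sat Q e diagram_form <->
  (forall i j, i < M -> j < M -> p i = p j -> i = j) /\ compatible Q M p.
Proof.
move=> e_p /=; rewrite !sat_bigAnd compatible_nat_tuples.
have sat_eq (i j : 'I_M) : sat Q e (FEq k (v + i) (v + j)) <-> p i = p j.
  by rewrite /= !e_p.
split=> [[p_inj p_comp] | [p_inj p_comp]]; split.
- move=> i j lt_iM lt_jM.
  have := p_inj (Ordinal lt_iM, Ordinal lt_jM).
  by rewrite mem_enum sat_Fmatch sat_eq => /(_ isT)[].
- move=> S; have := p_comp S.
  by rewrite mem_enum sat_Fmatch (sat_Q_image_form _ e_p) => /(_ isT).
- case=> i j _; rewrite sat_Fmatch sat_eq /=.
  by split=> [-> | /p_inj]; last exact.
- by move=> S _; rewrite sat_Fmatch (sat_Q_image_form _ e_p).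
Qed.

End Diagram.

Lemma aut_orbitP k (Q : quant k) (Qgood : good Q) n m (a b : n.-tuple nat) :
  (forall i, tnth a i < m) ->
  aut_orbit Q a b <->
  exists p, [/\ forall i j, i < m -> j < m -> p i = p j -> i = j,
                compatible Q m p & b = map_tuple p a].
Proof.
move=> a_small; split=> [[g [[g_bij g_fix] ->]] | [p [p_inj p_comp ->]]].
  by exists g; split=> [i j _ _ | A _ | //]; [exact: bij_inj | exact: g_fix].
have [_ [_ extend]] := Qgood.
have [f [f_aut f_p]] := extend m p p_inj p_comp.
exists f; split=> //; apply/eq_map_tuple_iff => i.
by rewrite tnth_map f_p.
Qed.

Definition link_form k n (a : n.-tuple nat) : form k :=
  bigAnd (fun i : 'I_n => FEq k i (n + tnth a i)) (enum 'I_n).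

Lemma sat_link_form k (Q : quant k) n (a : n.-tuple nat) e :
  sat Q e (link_form k a) <-> forall i : 'I_n, e i = e (n + tnth a i).
Proof.
rewrite sat_bigAnd; split=> [link i | link i _]; last exact: link.
by apply: link; rewrite mem_enum.
Qed.

Theorem proposition12 (k : nat) (Q : quant k) (HQ : good Q)
  (n : nat) (a : n.-tuple nat) : definable Q (aut_orbit Q a).
Proof.
pose m := \max_(i < n) tnth a i.
have a_small i : tnth a i < m.+1 by rewrite ltnS leq_bigmax.
exists (FExs (iota n m.+1) (FAnd (diagram_form Q m n) (link_form k a))) => b e e_b.
rewrite (aut_orbitP HQ _ a_small) sat_FExs_mkseq size_iota.
suff orbit_sat p : [/\ forall i j, i < m.+1 -> j < m.+1 -> p i = p j -> i = j,
    compatible Q m.+1 p & b = map_tuple p a] <->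
    sat Q (upd e (iota n m.+1) (mkseq p m.+1)) (diagram_form Q m n) /\
    sat Q (upd e (iota n m.+1) (mkseq p m.+1)) (link_form k a).
  by split=> -[p /orbit_sat]; exists p.
have [_ [Qdown _]] := HQ.
set E := upd e _ _.
have E_p j : j < m.+1 -> E (n + j) = p j by apply: upd_iota_mkseq.
have E_b (i : 'I_n) : E i = tnth b i by rewrite /E upd_iota_below // e_b // (tnth_nth 0).
have link_iff :
    (forall i : 'I_n, E i = E (n + tnth a i)) <-> forall i, tnth b i = p (tnth a i).
  by split=> E_link i; have := E_link i; rewrite E_b E_p.
rewrite (sat_diagram_form Qdown E_p) sat_link_form link_iff -eq_map_tuple_iff.
by split=> [[] | [[]]].
Qed.
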